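(* Let $\mathcal G$ be a continuous game with players $k\in\{1,\dots,K\}$, action sets $\mathcal Z_k=\mathbb R^{n_k}$ and twice continuously differentiable cost functions $f_k:\mathbb R^n\to\mathbb R$, with gradient operator $F=F_{\mathcal G}$. Suppose $\mathcal G$ is monotone and there are $\ell,\Lambda>0$ with $\|F(z)-F(z')\|\le\ell\|z-z'\|$ and $\|\partial F(z)-\partial F(z')\|_\sigma\le\Lambda\|z-z'\|$ for all $z,z'$. Let $z^{(-1)},z^{(0)}\in\mathbb R^n$ and suppose there is $z^*$ with $F(z^* )=0$, $\|z^*-z^{(-1)}\|\le D$, $\|z^*-z^{(0)}\|\le D$. Let $\eta\le\min\{\frac1{150\ell},\frac1{1711D\Lambda}\}$ and let $z^{(t)}$ be the iterates $z^{(t+1)}=z^{(t)}-2\eta F(z^{(t)})+\eta F(z^{(t-1)})$. For each $k$ let $\mathcal Z_k':=\{w\in\mathbb R^{n_k}:\|w-z_k^{(0)}\|\le 3D\}$ and $\mathcal Z'=\prod_k\mathcal Z_k'$. Then for every integer $T\ge1$, $$\mathrm{Gap}_{\mathcal G}^{\mathcal Z'}(z^{(T)})\le\frac{180KD^2}{\eta\sqrt T}.$$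
   Context: $F_{\mathcal G}(z):=(\nabla_{z_1}f_1(z),\dots,\nabla_{z_K}f_K(z))$; the game is monotone if $\langle F_{\mathcal G}(z')-F_{\mathcal G}(z),z'-z\rangle\ge0$ for all $z,z'$. $\partial F$ is the Jacobian, $\|\cdot\|_\sigma$ the spectral norm, $z_k^{(0)}$ the $k$-th block of $z^{(0)}$. For compact $\mathcal Z_k'\subseteq\mathbb R^{n_k}$, the total gap function is $\mathrm{Gap}_{\mathcal G}^{\mathcal Z'}(z):=\sum_{k=1}^K\big(f_k(z)-\min_{z_k'\in\mathcal Z_k'}f_k(z_k',z_{-k})\big)$, where $z_{-k}$ denotes the actions of the players other than $k$. *)

From HB Require Import structures.
From mathcomp Require Import all_boot all_order all_algebra.
From mathcomp Require Import all_classical all_reals.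
From mathcomp Require Import topology normedtype derive.
Set Implicit Arguments. Unset Strict Implicit. Unset Printing Implicit Defensive.
Import Order.TTheory GRing.Theory Num.Theory.
Import numFieldNormedType.Exports.
Local Open Scope ring_scope.
Local Open Scope classical_set_scope.

(* Coordinates of R^n, n = n_1 + ... + n_K, indexed by pairs (k, i) with
   k : 'I_K a player and i : 'I_(nk k) a coordinate of player k's action. *)
Definition gcoord (K : nat) (nk : 'I_K -> nat) : finType :=
  {k : 'I_K & 'I_(nk k)}.

Section GameDefs.
Variable R : realType.

Definition enorm (T : finType) (v : T -> R) : R := Num.sqrt (\sum_(c : T) v c ^+ 2).

Variables (K : nat) (nk : 'I_K -> nat).
Local Notation C := (gcoord nk).
Local Notation vec := (C -> R).

Definition pline (g : vec -> R) (c : C) (z : vec) : R -> R :=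
  fun t => g (fun d => z d + t * (d == c)%:R).
Definition has_pderiv (g : vec -> R) (c : C) (z : vec) : Prop :=
  derivable (pline g c z) 0 1.
Definition pderiv (g : vec -> R) (c : C) (z : vec) : R :=
  derive1 (pline g c z) 0.

Definition econt (h : vec -> R) : Prop :=
  forall z (e : R), 0 < e -> exists2 d : R, 0 < d &
    forall z', enorm (fun c => z' c - z c) < d -> `|h z' - h z| < e.

Definition is_C2 (g : vec -> R) : Prop :=
  [/\ forall c z, has_pderiv g c z,
      forall c, econt (pderiv g c),
      forall c d z, has_pderiv (pderiv g c) d z &
      forall c d, econt (pderiv (pderiv g c) d)].

Definition gameF (f : 'I_K -> vec -> R) (z : vec) : vec :=
  fun c => pderiv (f (tag c)) c z.

Definition jacF (f : 'I_K -> vec -> R) (z : vec) : C -> C -> R :=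
  fun c d => pderiv (fun w => gameF f w c) d z.

Definition specnorm (A : C -> C -> R) : R :=
  sup [set enorm (fun c => \sum_(d : C) A c d * v d) | v in [set v : vec | enorm v <= 1]].

Definition monotone_op (F : vec -> vec) : Prop :=
  forall z z', 0 <= \sum_(c : C) (F z' c - F z c) * (z' c - z c).

(* optimistic gradient iterates: (z^(t-1), z^(t)) *)
Fixpoint ogd_pair (F : vec -> vec) (eta : R) (zm1 z0 : vec) (t : nat) : vec * vec :=
  match t with
  | 0 => (zm1, z0)
  | t'.+1 => let: (p, q) := ogd_pair F eta zm1 z0 t' in
             (q, fun c => q c - 2 * eta * F q c + eta * F p c)
  end.
Definition ogd F eta zm1 z0 t : vec := (ogd_pair F eta zm1 z0 t).2.

Definition blk (z : vec) (k : 'I_K) (i : 'I_(nk k)) : R :=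
  z (Tagged (fun k => 'I_(nk k)) i).
Arguments blk : clear implicits.

(* profiles (z'_k, z_{-k}) with z'_k ranging over
   Z'_k = { w in R^(n_k) | ||w - z0_k|| <= r } *)
Definition dev_set (z0 : vec) (r : R) (k : 'I_K) (z : vec) : set vec :=
  [set z' : vec | (forall c : C, tag c != k -> z' c = z c) /\
                  enorm (fun i : 'I_(nk k) => blk z' k i - blk z0 k i) <= r].

(* total gap function w.r.t. Z' = prod_k Z'_k; the min over the compact set
   Z'_k (attained since f_k is continuous) is written as an infimum *)
Definition gap (f : 'I_K -> vec -> R) (z0 : vec) (r : R) (z : vec) : R :=
  \sum_(k < K) (f k z - inf [set f k z' | z' in dev_set z0 r k z]).

End GameDefs.
Arguments blk {R K nk} z k i.

From HB Require Import structures.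
From mathcomp Require Import all_boot all_order all_algebra.
From mathcomp Require Import all_classical all_reals.
From mathcomp Require Import topology normedtype derive.
From mathcomp Require Import ring lra.
Set Implicit Arguments. Unset Strict Implicit. Unset Printing Implicit Defensive.
Import Order.TTheory GRing.Theory Num.Theory.
Import numFieldNormedType.Exports.
Local Open Scope ring_scope.
Local Open Scope classical_set_scope.

(* Write w_t := z^(t) + eta F(z^(t-1)).  The optimistic update is Popov's
   extragradient method: w_(t+1) = w_t - eta F(z^(t)) and
   z^(t+1) = w_(t+1) - eta F(z^(t)).  Put q := (eta ell)^2 <= 1/150^2.
   Monotonicity at z* and the Lipschitz bound show that the energy
   E_t := |w_(t+1) - z*|^2 + 2 q eta^2 |F z^(t-1)|^2 loses at least
   eta^2 |F z^(t)|^2 / 2 per step.  Monotonicity between consecutive leading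
   points shows that Phi_t := |F w_t|^2 + |F w_t - F z^(t-1)|^2 is
   nonincreasing.  Since Phi_t <= 6 (|F z^(t)|^2 + |F z^(t-1)|^2), the quantity
   eta^2 t Phi_t + 12 (E_t + E_(t-1)) decreases too, which yields
   eta^2 T |F z^(T)|^2 <= 150 D^2 and |z^(T) - z*|^2 <= 13 D^2.
   Monotonicity of F also makes each f_k convex in its own block, so for a
   unilateral deviation z' we get f_k(z) - f_k(z') <= <F z, z - z'>, and Young's
   inequality bounds this by 180 D^2 / (eta sqrt T) on Z'. *)

Section ScalarInequalities.
Variable R : realType.

Lemma mulr_le_young (al u v : R) :
  0 < al -> u * v <= al / 2 * u ^+ 2 + (2 * al)^-1 * v ^+ 2.
Proof.
move=> al_gt0; rewrite -subr_ge0.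
have -> : al / 2 * u ^+ 2 + (2 * al)^-1 * v ^+ 2 - u * v = (al * u - v) ^+ 2 / (2 * al).
  by field; rewrite gt_eqF.
by rewrite divr_ge0 ?sqr_ge0 // mulr_ge0 // ltW.
Qed.

Lemma sqrDB_le3 (a b c : R) :
  (a + b - c) ^+ 2 <= 3 * a ^+ 2 + 3 * b ^+ 2 + 3 * c ^+ 2.
Proof.
rewrite -subr_ge0 (_ : _ - _ = (a - b) ^+ 2 + (a + c) ^+ 2 + (b + c) ^+ 2); last by ring.
by rewrite !addr_ge0 ?sqr_ge0.
Qed.

Lemma young_le_div (t u w a b : R) : 0 < t ->
  t ^+ 2 * u <= a -> w <= b -> t / 2 * u + (2 * t)^-1 * w <= (a + b) / (2 * t).
Proof.
move=> t_gt0 ua wb.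
rewrite (_ : t / 2 * u + (2 * t)^-1 * w = (t ^+ 2 * u + w) / (2 * t)).
  by rewrite ler_pM2r ?invr_gt0 ?mulr_gt0 //; lra.
by field; rewrite gt_eqF.
Qed.

End ScalarInequalities.

Section SquaredNorm.
Variables (R : realType) (T : finType).
Implicit Types (u v : T -> R).

Definition sqnorm v : R := \sum_c v c ^+ 2.

Lemma sqnorm_ge0 v : 0 <= sqnorm v.
Proof. by apply: sumr_ge0 => c _; rewrite sqr_ge0. Qed.

Lemma sqr_enorm v : enorm v ^+ 2 = sqnorm v.
Proof. by rewrite sqr_sqrtr // sqnorm_ge0. Qed.

Lemma sqnorm_le_sqr v (l : R) : 0 <= l -> enorm v <= l -> sqnorm v <= l ^+ 2.
Proof. by move=> l_ge0 vl; rewrite -sqr_enorm ler_sqr ?nnegrE ?sqrtr_ge0. Qed.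

Lemma sqnormBC u v : sqnorm (fun c => u c - v c) = sqnorm (fun c => v c - u c).
Proof. by apply: eq_bigr => c _; rewrite -sqrrN opprB. Qed.

Lemma ler_sum_lin2 (f g h : T -> R) (a b : R) :
  (forall c, f c <= a * g c + b * h c) ->
  \sum_c f c <= a * \sum_c g c + b * \sum_c h c.
Proof. by move=> fle; rewrite !mulr_sumr -big_split; apply: ler_sum => c _. Qed.

Lemma ler_sum_lin3 (f g h k : T -> R) (a b d : R) :
  (forall c, f c <= a * g c + b * h c + d * k c) ->
  \sum_c f c <= a * \sum_c g c + b * \sum_c h c + d * \sum_c k c.
Proof. by move=> fle; rewrite !mulr_sumr -!big_split; apply: ler_sum => c _. Qed.

Lemma inner_le_young u v (al : R) : 0 < al ->
  \sum_c u c * v c <= al / 2 * sqnorm u + (2 * al)^-1 * sqnorm v.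
Proof. by move=> al_gt0; apply: ler_sum_lin2 => c; apply: mulr_le_young. Qed.

End SquaredNorm.

Section RealCalculus.
Variable R : realType.
Implicit Types phi dphi : R -> R.

Lemma MVT_origin phi dphi : (forall x : R, is_derive x (1 : R) phi (dphi x)) ->
  forall t, exists2 xi, `|xi| <= `|t| & phi t - phi 0 = t * dphi xi.
Proof.
move=> phi_der t.
have phi_cont a b : {within `[a, b], continuous phi}.
  by apply: derivable_within_continuous => x _; case: (phi_der x).
have [t_ge0|t_lt0] := leP 0 t.
  have [xi] := MVT_segment t_ge0 (fun x _ => phi_der x) (phi_cont 0 t).
  rewrite in_itv /= => /andP[xi_ge0 xi_le] ->.
  by exists xi; rewrite ?subr0 1?mulrC // !ger0_norm // (le_trans xi_ge0 xi_le).
have [xi] := MVT_segment (ltW t_lt0) (fun x _ => phi_der x) (phi_cont t 0).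
rewrite in_itv /= => /andP[t_le xi_le0] phiE.
exists xi; last by rewrite -opprB phiE; ring.
by rewrite !ler0_norm ?lerN2 // ltW.
Qed.

Lemma nondecreasing_derive_le_increment phi dphi :
  (forall x : R, is_derive x (1 : R) phi (dphi x)) -> {homo dphi : s t / s <= t} ->
  dphi 0 <= phi 1 - phi 0.
Proof.
move=> phi_der dphi_homo.
have phi_cont : {within `[0, 1], continuous phi}.
  by apply: derivable_within_continuous => x _; case: (phi_der x).
have [xi] := MVT_segment ler01 (fun x _ => phi_der x) phi_cont.
rewrite in_itv /= => /andP[xi_ge0 _] ->.
by rewrite subr0 mulr1 dphi_homo.
Qed.

End RealCalculus.

Section PartialDerivatives.
Variables (R : realType) (K : nat) (nk : 'I_K -> nat).
Local Notation C := (gcoord nk).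
Local Notation vec := (C -> R).
Implicit Types (g : vec -> R) (x y z d : vec).

Definition is_C1 g : Prop :=
  (forall c z, has_pderiv g c z) /\ (forall c, econt (pderiv g c)).

Lemma is_C2_C1 g : is_C2 g -> is_C1 g.
Proof. by case. Qed.

Definition shift_coord y (c0 : C) (u : R) : vec := fun c => y c + u * (c == c0)%:R.

Lemma pline_is_derive g c0 y u :
  has_pderiv g c0 (shift_coord y c0 u) ->
  is_derive u (1 : R) (pline g c0 y) (pderiv g c0 (shift_coord y c0 u)).
Proof.
move=> g_der.
have quotE : (fun h : R => h^-1 *: ((pline g c0 y \o shift u) (h *: 1) - pline g c0 y u)) =
    (fun h : R => h^-1 *: ((pline g c0 (shift_coord y c0 u) \o shift 0) (h *: 1)
                           - pline g c0 (shift_coord y c0 u) 0)).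
  apply/funext => h; rewrite /pline /shift_coord /=.
  by congr (_ *: (g _ - g _)); apply/funext => c; rewrite /GRing.scale /=; ring.
apply: DeriveDef; first by rewrite /derivable quotE.
by rewrite /derive quotE /pderiv derive1E /derive.
Qed.

(* Moving [x] to [x + h d] one coordinate at a time turns the increment of [g]
   into a telescoping sum of one-variable increments. *)
Definition stair x d (h : R) (j : nat) : vec :=
  fun c => x c + h * (enum_rank c < j)%:R * d c.

Lemma stair0 x d h : stair x d h 0 = x.
Proof. by apply/funext => c; rewrite /stair ltn0 mulr0 mul0r addr0. Qed.

Lemma stair_card x d h : stair x d h #|C| = fun c => x c + h * d c.
Proof. by apply/funext => c; rewrite /stair ltn_ord mulr1. Qed.

Lemma stairS x d h (j : 'I_#|C|) :
  stair x d h j.+1 = shift_coord (stair x d h j) (enum_val j) (h * d (enum_val j)).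
Proof.
apply/funext => c; rewrite /stair /shift_coord ltnS leq_eqVlt.
have [->|neq] := eqVneq c (enum_val j).
  by rewrite enum_valK !eqxx ltnn /=; ring.
have -> : (nat_of_ord (enum_rank c) == nat_of_ord j) = false.
  by apply: contraNF neq => /eqP/ord_inj <-; rewrite enum_rankK.
by rewrite /= ?(negbTE neq) /=; ring.
Qed.

Lemma stair_telescope g x d h :
  g (fun c => x c + h * d c) - g x =
  \sum_(j < #|C|) (g (stair x d h j.+1) - g (stair x d h j)).
Proof.
rewrite -(big_mkord xpredT (fun j => g (stair x d h j.+1) - g (stair x d h j))).
by rewrite telescope_sumr // stair_card stair0.
Qed.

Lemma sqnorm_shift_stair_le x d h (j : 'I_#|C|) (u : R) :
  `|u| <= `|h * d (enum_val j)| ->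
  sqnorm (fun c => shift_coord (stair x d h j) (enum_val j) u c - x c) <= h ^+ 2 * sqnorm d.
Proof.
move=> u_le; rewrite /sqnorm mulr_sumr; apply: ler_sum => c _.
rewrite /shift_coord /stair -exprMn.
have [->|neq] := eqVneq c (enum_val j).
  rewrite enum_valK ltnn mulr0 mul0r addr0 mulr1 addrC addKr.
  by rewrite -[leLHS]real_normK ?num_real // -[leRHS]real_normK ?num_real //
    ler_sqr ?nnegrE.
rewrite mulr0 addr0 addrC addKr.
by case: (enum_rank c < j)%N; rewrite ?mulr1 ?mulr0 ?mul0r ?expr0n ?sqr_ge0.
Qed.

Lemma stair_step_le g x d (h e : R) (j : 'I_#|C|) :
  h != 0 -> (forall c z, has_pderiv g c z) ->
  (forall y, sqnorm (fun c => y c - x c) <= h ^+ 2 * sqnorm d ->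
     `|pderiv g (enum_val j) y - pderiv g (enum_val j) x| <= e) ->
  `|h^-1 * (g (stair x d h j.+1) - g (stair x d h j))
    - pderiv g (enum_val j) x * d (enum_val j)| <= `|d (enum_val j)| * e.
Proof.
move=> h_neq0 g_der pderiv_near; set cj := enum_val j.
have [xi xi_le stepE] := MVT_origin
  (fun u => pline_is_derive (g_der cj (shift_coord (stair x d h j) cj u))) (h * d cj).
have -> : g (stair x d h j.+1) - g (stair x d h j) =
    pline g cj (stair x d h j) (h * d cj) - pline g cj (stair x d h j) 0.
  by rewrite /pline stairS; congr (g _ - g _); apply/funext => c; rewrite mul0r addr0.
rewrite stepE mulrA mulrA mulVf // mul1r [pderiv g cj x * _]mulrC -mulrBr normrM.
by rewrite ler_wpM2l // pderiv_near // sqnorm_shift_stair_le.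
Qed.

Lemma econt_near0 (p : vec -> R) x (M e : R) : econt p -> 0 <= M -> 0 < e ->
  \forall t \near (0 : R), forall y,
    sqnorm (fun c => y c - x c) <= t ^+ 2 * M -> `|p y - p x| <= e.
Proof.
move=> p_cont M_ge0 e_gt0; have [del del_gt0 p_near] := p_cont x e e_gt0.
have sM_gt0 : 0 < Num.sqrt M + 1 by rewrite ltr_wpDl ?sqrtr_ge0.
apply: filterS (nbhs0_lt (divr_gt0 del_gt0 sM_gt0)) => t t_small y y_near.
apply/ltW/p_near; apply: (@le_lt_trans _ _ (`|t| * (Num.sqrt M + 1))).
  rewrite /enorm (le_trans (y := `|t| * Num.sqrt M)) ?ler_wpM2l ?lerDl //.
  by rewrite -sqrtr_sqr -sqrtrM ?sqr_ge0 // ler_sqrt // mulr_ge0 ?sqr_ge0.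
by rewrite -ltr_pdivlMr.
Qed.

Lemma sum_enum_val (h : C -> R) : \sum_c h c = \sum_(j < #|C|) h (enum_val j).
Proof. by rewrite (reindex (fun j : 'I_#|C| => enum_val j) (onW_bij _ (@enum_val_bij C))). Qed.

Lemma pderiv_dir_cvg g x d : is_C1 g ->
  (fun h : R => h^-1 *: (g (fun c => x c + h * d c) - g x)) @ 0^' -->
    \sum_c pderiv g c x * d c.
Proof.
case=> g_der g_cont; apply/cvgrPdist_lt => eps eps_gt0.
set N := \sum_c `|d c|.
have N_ge0 : 0 <= N by apply: sumr_ge0.
have e_gt0 : 0 < eps / (N + 1) by rewrite divr_gt0 // ltr_wpDl.
have near_all :=
  @filter_forall _ _ _ _ _ (fun c => econt_near0 x (g_cont c) (sqnorm_ge0 d) e_gt0).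
near=> h.
have h_neq0 : h != 0 by near: h; exact: nbhs_dnbhs_neq.
have pderiv_near : forall c y, sqnorm (fun c => y c - x c) <= h ^+ 2 * sqnorm d ->
    `|pderiv g c y - pderiv g c x| <= eps / (N + 1).
  by near: h; apply: cvg_within; exact: near_all.
rewrite distrC stair_telescope /GRing.scale /= mulr_sumr sum_enum_val -sumrB.
apply: le_lt_trans (ler_norm_sum _ _ _) _.
apply: (@le_lt_trans _ _ (\sum_(j < #|C|) `|d (enum_val j)| * (eps / (N + 1)))).
  by apply: ler_sum => j _; apply: stair_step_le => // y; exact: pderiv_near.
rewrite -mulr_suml -(sum_enum_val (fun c => `|d c|)) -/N mulrA ltr_pdivrMr ?ltr_wpDl //.
by rewrite mulrDr mulr1 mulrC ltrDl.
Unshelve. all: by end_near.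
Qed.

Lemma line_is_derive g z d (s : R) : is_C1 g ->
  is_derive s (1 : R) (fun s => g (fun c => z c + s * d c))
    (\sum_c pderiv g c (fun c => z c + s * d c) * d c).
Proof.
move=> g_C1; set phi := fun s => g (fun c => z c + s * d c).
have quotE : (fun h : R => h^-1 *: ((phi \o shift s) (h *: 1) - phi s)) =
    (fun h : R => h^-1 *: (g (fun c => (z c + s * d c) + h * d c) - g (fun c => z c + s * d c))).
  apply/funext => h; rewrite /phi /=; congr (_ *: (g _ - _)).
  by apply/funext => c; rewrite /GRing.scale /=; ring.
have quot_cvg := pderiv_dir_cvg (x := fun c => z c + s * d c) (d := d) g_C1.
apply: DeriveDef; first by rewrite /derivable quotE; apply/cvg_ex; eexists; exact: quot_cvg.
by rewrite /derive quotE; apply: cvg_lim.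
Qed.

Lemma gradient_le_increment g z d : is_C1 g ->
  {homo (fun s : R => \sum_c pderiv g c (fun c => z c + s * d c) * d c) : s t / s <= t} ->
  \sum_c pderiv g c z * d c <= g (fun c => z c + d c) - g z.
Proof.
move=> g_C1 grad_homo.
have := nondecreasing_derive_le_increment (fun s => line_is_derive z d s g_C1) grad_homo.
have line0 : (fun c => z c + 0 * d c) = z by apply/funext => c; rewrite mul0r addr0.
have line1 : (fun c => z c + 1 * d c) = (fun c => z c + d c).
  by apply/funext => c; rewrite mul1r.
by rewrite /= line0 line1.
Qed.

Lemma monotone_op_line (F : vec -> vec) z d : monotone_op F ->
  {homo (fun s : R => \sum_c F (fun c => z c + s * d c) c * d c) : s t / s <= t}.
Proof.
move=> F_mono s t le_st; rewrite -subr_ge0.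
have [->|neq] := eqVneq s t; first by rewrite subrr.
have st_gt0 : 0 < t - s by rewrite subr_gt0 lt_neqAle neq le_st.
have := F_mono (fun c => z c + s * d c) (fun c => z c + t * d c).
rewrite (_ : \sum_c _ = (t - s) * (\sum_c F (fun c => z c + t * d c) c * d c
                                   - \sum_c F (fun c => z c + s * d c) c * d c)).
  by rewrite pmulr_rge0.
by rewrite -sumrB mulr_sumr; apply: eq_bigr => c _; ring.
Qed.

End PartialDerivatives.

Section Games.
Variables (R : realType) (K : nat) (nk : 'I_K -> nat).
Local Notation C := (gcoord nk).
Local Notation vec := (C -> R).
Variable f : 'I_K -> vec -> R.
Implicit Types (z zs : vec) (k : 'I_K).

Lemma block_gradient_le k z (z' : vec) :
  is_C1 (f k) -> monotone_op (gameF f) -> (forall c, tag c != k -> z' c = z c) ->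
  \sum_c gameF f z c * (z' c - z c) <= f k z' - f k z.
Proof.
move=> fk_C1 F_mono z'_off; set d := fun c => z' c - z c.
have gradE w : \sum_c pderiv (f k) c w * d c = \sum_c gameF f w c * d c.
  apply: eq_bigr => c _; have [<-|neq] := eqVneq (tag c) k; first by [].
  by rewrite /d z'_off // subrr !mulr0.
have z'E : z' = (fun c => z c + d c) by apply/funext => c; rewrite /d addrC subrK.
rewrite -gradE [in f k z']z'E; apply: gradient_le_increment => // s t le_st.
by rewrite !gradE; exact: monotone_op_line.
Qed.

Lemma sum_block k (h : vec) :
  \sum_c (tag c == k)%:R * h c = \sum_(i < nk k) h (Tagged (fun k => 'I_(nk k)) i).
Proof.
have := @sig_big_dep R 0 +%R 'I_K (fun k => 'I_(nk k)) xpredT (fun _ => xpredT)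
   (fun i j => (i == k)%:R * h (Tagged (fun k => 'I_(nk k)) j)).
rewrite /= => sigE.
rewrite (eq_bigr (fun p : C => (tag p == k)%:R * h (Tagged (fun k => 'I_(nk k)) (tagged p))));
  last by move=> [].
rewrite -sigE (bigD1 k) //= [X in _ + X]big1 ?addr0.
  by apply: eq_bigr => j _; rewrite eqxx mul1r.
by move=> i /negbTE ik; apply: big1 => j _; rewrite ik mul0r.
Qed.

Lemma dev_set_sqdist (z0 : vec) (r : R) k z (z' : vec) zs :
  0 <= r -> dev_set z0 r k z z' ->
  sqnorm (fun c => z c - z' c) <=
    3 * sqnorm (fun c => z c - zs c) + 3 * sqnorm (fun c => zs c - z0 c) + 3 * r ^+ 2.
Proof.
move=> r_ge0 [z'_off z'_near].
have block_le : \sum_c (tag c == k)%:R * (z' c - z0 c) ^+ 2 <= r ^+ 2.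
  by rewrite sum_block; exact: sqnorm_le_sqr z'_near.
apply: le_trans (ler_sum_lin3 (k := fun c => (tag c == k)%:R * (z' c - z0 c) ^+ 2) _) _.
  move=> c; have [_|neq] := eqVneq (tag c) k.
    rewrite mul1r (_ : z c - z' c = (z c - zs c) + (zs c - z0 c) - (z' c - z0 c)).
      exact: sqrDB_le3.
    by ring.
  rewrite z'_off // subrr expr0n mul0r mulr0 addr0.
  by rewrite addr_ge0 // mulr_ge0 // sqr_ge0.
by rewrite lerD2l ler_wpM2l.
Qed.

Lemma gap_le (z0 : vec) z (r B : R) :
  (forall k, is_C1 (f k)) -> monotone_op (gameF f) -> 0 <= r ->
  (forall k z', dev_set z0 r k z z' -> \sum_c gameF f z c * (z c - z' c) <= B) ->
  gap f z0 r z <= K%:R * B.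
Proof.
move=> f_C1 F_mono r_ge0 dev_le.
rewrite /gap mulr_natl -[in B *+ K](card_ord K) -sumr_const; apply: ler_sum => k _.
rewrite lerBlDr addrC -lerBlDr; apply: lb_le_inf.
  set z1 := fun c => if tag c == k then z0 c else z c.
  exists (f k z1), z1 => //; split; first by move=> c /negbTE; rewrite /z1 => ->.
  rewrite /enorm /blk /z1 /= eqxx; under eq_bigr do rewrite subrr.
  by rewrite big1 ?sqrtr0 // => i _; rewrite expr0n.
move=> _ [z' dev <-].
have := dev_le k z' dev; have := block_gradient_le (f_C1 k) F_mono dev.1.
rewrite (_ : \sum_c _ * (z c - z' c) = - \sum_c gameF f z c * (z' c - z c)).
  by lra.
by rewrite -sumrN; apply: eq_bigr => c _; ring.
Qed.

End Games.

Section OptimisticGradient.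
Variables (R : realType) (K : nat) (nk : 'I_K -> nat).
Local Notation vec := (gcoord nk -> R).
Variables (F : vec -> vec) (ell eta D : R) (zm1 z0 zs : vec).
Hypothesis F_mono : monotone_op F.
Hypothesis F_lip : forall z z',
  sqnorm (fun c => F z c - F z' c) <= ell ^+ 2 * sqnorm (fun c => z c - z' c).
Hypothesis F_zs : forall c, F zs c = 0.
Hypothesis eta_gt0 : 0 < eta.
Hypothesis ell_ge0 : 0 <= ell.
Hypothesis eta_ell_le : eta * ell <= 1 / 150.
Hypothesis dist_m1 : sqnorm (fun c => zs c - zm1 c) <= D ^+ 2.
Hypothesis dist_0 : sqnorm (fun c => zs c - z0 c) <= D ^+ 2.

(* [og_traj n] is the iterate z^(n-1). *)
Definition og_traj (n : nat) : vec := if n is m.+1 then ogd F eta zm1 z0 m else zm1.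

Definition og_lead (n : nat) : vec := fun c => og_traj n.+1 c + eta * F (og_traj n) c.

Local Notation Gz n := (F (og_traj n)).
Local Notation Gw n := (F (og_lead n)).
Local Notation q := ((eta * ell) ^+ 2).

Definition og_energy (n : nat) : R :=
  sqnorm (fun c => og_lead n.+1 c - zs c) + 2 * q * eta ^+ 2 * sqnorm (Gz n).

Definition og_potential (n : nat) : R :=
  sqnorm (Gw n) + sqnorm (fun c => Gw n c - Gz n c).

Definition og_lyapunov (n : nat) : R :=
  eta ^+ 2 * n.+1%:R * og_potential n.+1 + 12 * (og_energy n.+1 + og_energy n).

Lemma ogd_pairE t : ogd_pair F eta zm1 z0 t = (og_traj t, og_traj t.+1).
Proof. by elim: t => [|t IH] //=; rewrite IH /ogd /= IH. Qed.

Lemma og_trajSS n c :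
  og_traj n.+2 c = og_traj n.+1 c - 2 * eta * Gz n.+1 c + eta * Gz n c.
Proof. by rewrite /= /ogd /= ogd_pairE. Qed.

Lemma og_rate_mulr_le (X : R) : 0 <= X -> q * X <= X / 22500.
Proof.
move=> X_ge0; rewrite mulrC; apply: ler_wpM2l => //.
have ee_ge0 : 0 <= eta * ell by rewrite mulr_ge0 // ltW.
by have := ler_pM ee_ge0 ee_ge0 eta_ell_le eta_ell_le; rewrite expr2; lra.
Qed.

Lemma grad_sqnorm_le n :
  eta ^+ 2 * sqnorm (Gz n) <= q * sqnorm (fun c => og_traj n c - zs c).
Proof.
have -> : sqnorm (Gz n) = sqnorm (fun c => Gz n c - F zs c).
  by apply: eq_bigr => c _; rewrite F_zs subr0.
by rewrite exprMn -[in leRHS]mulrA; apply: ler_wpM2l; [exact: sqr_ge0 | exact: F_lip].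
Qed.

Lemma lead_dist_step n :
  sqnorm (fun c => og_lead n.+1 c - zs c) <=
    sqnorm (fun c => og_lead n c - zs c)
    + eta ^+ 2 * sqnorm (fun c => Gz n.+1 c - Gz n c) - eta ^+ 2 * sqnorm (Gz n).
Proof.
have mono := mulr_ge0 (ltW eta_gt0) (F_mono zs (og_traj n.+1)).
have -> : sqnorm (fun c => og_lead n.+1 c - zs c) =
    sqnorm (fun c => og_lead n c - zs c) + eta ^+ 2 * sqnorm (fun c => Gz n.+1 c - Gz n c)
    - eta ^+ 2 * sqnorm (Gz n)
    - 2 * eta * \sum_c (F (og_traj n.+1) c - F zs c) * (og_traj n.+1 c - zs c).
  rewrite /sqnorm !mulr_sumr -big_split -!sumrB; apply: eq_bigr => c _.
  by rewrite /og_lead og_trajSS F_zs /=; ring.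
by lra.
Qed.

Lemma grad_step_le m :
  sqnorm (fun c => Gz m.+2 c - Gz m.+1 c) <= q * (8 * sqnorm (Gz m.+1) + 2 * sqnorm (Gz m)).
Proof.
apply: le_trans (F_lip _ _) _.
have step_le : sqnorm (fun c => og_traj m.+2 c - og_traj m.+1 c) <=
    eta ^+ 2 * 8 * sqnorm (Gz m.+1) + eta ^+ 2 * 2 * sqnorm (Gz m).
  apply: ler_sum_lin2 => c; rewrite og_trajSS.
  by have := sqr_ge0 (eta * (2 * Gz m.+1 c + Gz m c)); lra.
by have := ler_wpM2l (sqr_ge0 ell) step_le; lra.
Qed.

Lemma og_energy_ge0 n : 0 <= og_energy n.
Proof.
rewrite /og_energy addr_ge0 ?sqnorm_ge0 // mulr_ge0 ?sqnorm_ge0 //.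
by rewrite mulr_ge0 ?sqr_ge0 // mulr_ge0 ?sqr_ge0.
Qed.

Lemma og_energy_step m :
  og_energy m.+1 <= og_energy m - 1 / 2 * eta ^+ 2 * sqnorm (Gz m.+1).
Proof.
have S1_ge0 := mulr_ge0 (sqr_ge0 eta) (sqnorm_ge0 (Gz m.+1)).
have := lead_dist_step m.+1; have := ler_wpM2l (sqr_ge0 eta) (grad_step_le m).
have := og_rate_mulr_le S1_ge0.
by rewrite /og_energy; lra.
Qed.

Lemma og_energy_le_init m : og_energy m <= og_energy 0.
Proof.
elim: m => [|m IH] //; apply: le_trans (og_energy_step m) _.
by have := mulr_ge0 (sqr_ge0 eta) (sqnorm_ge0 (Gz m.+1)); lra.
Qed.

Lemma lead_grad_gap_le n : sqnorm (fun c => Gw n c - Gz n.+1 c) <= q * sqnorm (Gz n).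
Proof.
apply: le_trans (F_lip _ _) _.
rewrite (_ : sqnorm _ = eta ^+ 2 * sqnorm (Gz n)); first by lra.
by rewrite /sqnorm mulr_sumr; apply: eq_bigr => c _; rewrite /og_lead; ring.
Qed.

Lemma og_potential_step n : og_potential n.+1 <= og_potential n.
Proof.
set I := \sum_c (Gw n c - Gw n.+1 c) * Gz n.+1 c.
have I_ge0 : 0 <= I.
  have := F_mono (og_lead n) (og_lead n.+1).
  rewrite (_ : \sum_c _ = eta * I) ?pmulr_rge0 //.
  by rewrite /I mulr_sumr; apply: eq_bigr => c _; rewrite /og_lead og_trajSS; ring.
have lead_lip : sqnorm (fun c => Gw n.+1 c - Gz n.+1 c) <=
    q * sqnorm (fun c => Gz n c - Gz n.+1 c).
  apply: le_trans (F_lip _ _) _.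
  rewrite (_ : sqnorm _ = eta ^+ 2 * sqnorm (fun c => Gz n c - Gz n.+1 c)); first by lra.
  by rewrite /sqnorm mulr_sumr; apply: eq_bigr => c _; rewrite /og_lead og_trajSS; ring.
have grad_diff_le : sqnorm (fun c => Gz n c - Gz n.+1 c) <=
    2 * sqnorm (fun c => Gw n c - Gz n c) + 2 * sqnorm (fun c => Gw n c - Gz n.+1 c).
  apply: ler_sum_lin2 => c.
  by have := sqr_ge0 (Gw n c - Gz n c + (Gw n c - Gz n.+1 c)); lra.
have GwE : sqnorm (Gw n) = sqnorm (Gw n.+1) + 2 * I
    + sqnorm (fun c => Gw n c - Gz n.+1 c) - sqnorm (fun c => Gw n.+1 c - Gz n.+1 c).
  by rewrite /I /sqnorm mulr_sumr -!big_split -sumrB; apply: eq_bigr => c _ /=; ring.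
have := ler_wpM2l (sqr_ge0 (eta * ell)) grad_diff_le.
have Q0_ge0 := sqnorm_ge0 (fun c => Gw n c - Gz n c).
have S_ge0 := sqnorm_ge0 (fun c => Gw n c - Gz n.+1 c).
have := og_rate_mulr_le Q0_ge0; have := og_rate_mulr_le S_ge0.
by rewrite /og_potential; lra.
Qed.

Lemma og_potential_le_grad n : og_potential n <= 6 * (sqnorm (Gz n.+1) + sqnorm (Gz n)).
Proof.
have : og_potential n <= 6 * sqnorm (Gz n.+1) + 6 * sqnorm (fun c => Gw n c - Gz n.+1 c)
                          + 2 * sqnorm (Gz n).
  rewrite /og_potential /sqnorm -big_split /=; apply: ler_sum_lin3 => c.
  have := sqr_ge0 (Gw n c + Gz n c); have := sqr_ge0 (Gw n c - 2 * Gz n.+1 c); lra.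
have g0_ge0 := sqnorm_ge0 (Gz n).
by have := lead_grad_gap_le n; have := og_rate_mulr_le g0_ge0; lra.
Qed.

Lemma grad_le_og_potential n : sqnorm (Gz n.+1) <= 3 * og_potential n.
Proof.
have : sqnorm (Gz n.+1) <= 2 * sqnorm (Gw n) + 2 * sqnorm (fun c => Gw n c - Gz n.+1 c).
  apply: ler_sum_lin2 => c; have := sqr_ge0 (Gw n c + (Gw n c - Gz n.+1 c)); lra.
have : sqnorm (Gz n) <= 2 * sqnorm (Gw n) + 2 * sqnorm (fun c => Gw n c - Gz n c).
  apply: ler_sum_lin2 => c; have := sqr_ge0 (Gw n c + (Gw n c - Gz n c)); lra.
have := lead_grad_gap_le n; have := og_rate_mulr_le (sqnorm_ge0 (Gz n)).
have := sqnorm_ge0 (Gw n); have := sqnorm_ge0 (fun c => Gw n c - Gz n c).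
by rewrite /og_potential; lra.
Qed.

Lemma og_lyapunov_step m : og_lyapunov m.+1 <= og_lyapunov m.
Proof.
have eta2_ge0 := sqr_ge0 eta.
have := ler_wpM2l (mulr_ge0 eta2_ge0 (ler0n _ m.+2)) (og_potential_step m.+1).
have := ler_wpM2l eta2_ge0 (og_potential_le_grad m.+1).
have := og_energy_step m.+1; have := og_energy_step m.
by rewrite /og_lyapunov; lra.
Qed.

Lemma og_lyapunov_le_init m : og_lyapunov m <= og_lyapunov 0.
Proof. by elim: m => [|m IH] //; exact: le_trans (og_lyapunov_step m) IH. Qed.

Lemma og_traj0_dist : sqnorm (fun c => og_traj 0 c - zs c) <= D ^+ 2.
Proof. by rewrite sqnormBC; exact: dist_m1. Qed.

Lemma og_traj1_dist : sqnorm (fun c => og_traj 1 c - zs c) <= D ^+ 2.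
Proof. by rewrite sqnormBC; exact: dist_0. Qed.

Lemma grad0_le : eta ^+ 2 * sqnorm (Gz 0) <= q * D ^+ 2.
Proof. exact: le_trans (grad_sqnorm_le 0) (ler_wpM2l (sqr_ge0 _) og_traj0_dist). Qed.

Lemma grad1_le : eta ^+ 2 * sqnorm (Gz 1) <= q * D ^+ 2.
Proof. exact: le_trans (grad_sqnorm_le 1) (ler_wpM2l (sqr_ge0 _) og_traj1_dist). Qed.

Lemma og_energy0_le : og_energy 0 <= 2 * D ^+ 2 + D ^+ 2 / 3750.
Proof.
have G0_ge0 := mulr_ge0 (sqr_ge0 eta) (sqnorm_ge0 (Gz 0)).
have lead0_le : sqnorm (fun c => og_lead 0 c - zs c) <=
    2 * sqnorm (fun c => zs c - z0 c) + 2 * (eta ^+ 2 * sqnorm (Gz 0)).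
  rewrite mulrA; apply: ler_sum_lin2 => c; rewrite /og_lead /= /ogd /=.
  by have := sqr_ge0 (zs c - z0 c + eta * F zm1 c); lra.
have z_le : sqnorm (fun c => og_traj 1 c - og_traj 0 c) <= 4 * D ^+ 2.
  apply: le_trans (_ : _ <= 2 * sqnorm (fun c => zs c - z0 c)
                           + 2 * sqnorm (fun c => zs c - zm1 c)) _.
    apply: ler_sum_lin2 => c; rewrite /= /ogd /=.
    by have := sqr_ge0 (zs c - z0 c + (zs c - zm1 c)); lra.
  by have := dist_0; have := dist_m1; lra.
have := ler_wpM2l (sqr_ge0 eta) (F_lip (og_traj 1) (og_traj 0)).
have := ler_wpM2l (sqr_ge0 (eta * ell)) z_le.
have := lead_dist_step 0; have := og_rate_mulr_le G0_ge0; have := grad0_le.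
have := og_rate_mulr_le (sqr_ge0 D); have := dist_0.
by rewrite /og_energy; lra.
Qed.

Lemma og_potential1_le : eta ^+ 2 * og_potential 1 <= D ^+ 2.
Proof.
have z2_le : sqnorm (fun c => og_traj 2 c - zs c) <=
    3 * sqnorm (fun c => og_traj 1 c - zs c) + 12 * (eta ^+ 2 * sqnorm (Gz 1))
    + 3 * (eta ^+ 2 * sqnorm (Gz 0)).
  rewrite !mulrA; apply: ler_sum_lin3 => c; rewrite og_trajSS.
  have := sqr_ge0 (og_traj 1 c - zs c + 2 * eta * Gz 1 c).
  have := sqr_ge0 (og_traj 1 c - zs c - eta * Gz 0 c).
  by have := sqr_ge0 (2 * eta * Gz 1 c + eta * Gz 0 c); lra.
have := le_trans (grad_sqnorm_le 2) (ler_wpM2l (sqr_ge0 (eta * ell)) z2_le).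
have := ler_wpM2l (sqr_ge0 eta) (og_potential_le_grad 1).
have := ler_wpM2l (sqr_ge0 (eta * ell)) og_traj1_dist.
have := og_rate_mulr_le (mulr_ge0 (sqr_ge0 eta) (sqnorm_ge0 (Gz 0))).
have := og_rate_mulr_le (mulr_ge0 (sqr_ge0 eta) (sqnorm_ge0 (Gz 1))).
have := grad0_le; have := grad1_le; have := og_rate_mulr_le (sqr_ge0 D).
by have := sqr_ge0 D; lra.
Qed.

Lemma og_lyapunov0_le : og_lyapunov 0 <= 50 * D ^+ 2.
Proof.
have := og_energy_le_init 1; have := og_energy0_le; have := og_potential1_le.
by have := sqr_ge0 D; rewrite /og_lyapunov; lra.
Qed.

Lemma og_grad_le m : eta ^+ 2 * m.+1%:R * sqnorm (Gz m.+2) <= 150 * D ^+ 2.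
Proof.
have := ler_wpM2l (mulr_ge0 (sqr_ge0 eta) (ler0n _ m.+1)) (grad_le_og_potential m.+1).
have := og_lyapunov_le_init m; have := og_lyapunov0_le.
have := og_energy_ge0 m; have := og_energy_ge0 m.+1.
by rewrite /og_lyapunov; lra.
Qed.

Lemma og_traj_dist_le m : sqnorm (fun c => og_traj m.+2 c - zs c) <= 13 * D ^+ 2.
Proof.
have : sqnorm (fun c => og_traj m.+2 c - zs c) <=
    2 * sqnorm (fun c => og_lead m.+1 c - zs c) + 2 * (eta ^+ 2 * sqnorm (Gz m.+1)).
  rewrite mulrA; apply: ler_sum_lin2 => c; rewrite /og_lead.
  by have := sqr_ge0 (og_traj m.+2 c - zs c + 2 * eta * Gz m.+1 c); lra.
have := mulr_ge0 (sqr_ge0 (eta * ell)) (mulr_ge0 (sqr_ge0 eta) (sqnorm_ge0 (Gz m))).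
have := og_energy_step m; have := og_energy_le_init m; have := og_energy0_le.
have := og_energy_ge0 m.+1; have := sqr_ge0 D.
by rewrite /og_energy; lra.
Qed.

End OptimisticGradient.

Theorem corollary6 (R : realType) (K : nat) (nk : 'I_K -> nat)
  (f : 'I_K -> (gcoord nk -> R) -> R) (ell Lam D eta : R)
  (zm1 z0 zstar : gcoord nk -> R) :
  (forall k, is_C2 (f k)) ->
  monotone_op (gameF f) ->
  0 < ell -> 0 < Lam ->
  (forall z z', enorm (fun c => gameF f z c - gameF f z' c)
                <= ell * enorm (fun c => z c - z' c)) ->
  (forall z z', specnorm (fun c d => jacF f z c d - jacF f z' c d)
                <= Lam * enorm (fun c => z c - z' c)) ->
  gameF f zstar = (fun _ => 0) ->
  enorm (fun c => zstar c - zm1 c) <= D ->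
  enorm (fun c => zstar c - z0 c) <= D ->
  0 < eta ->
  eta * (150 * ell) <= 1 ->
  eta * (1711 * D * Lam) <= 1 ->
  forall T : nat, (1 <= T)%N ->
    gap f z0 (3 * D) (ogd (gameF f) eta zm1 z0 T)
      <= 180 * K%:R * D ^+ 2 / (eta * Num.sqrt T%:R).
Proof.
move=> f_C2 F_mono ell_gt0 _ F_lip _ F_zs dist_m1 dist_0 eta_gt0 eta_ell _ [//|m] _.
set F := gameF f; set z := ogd F eta zm1 z0 m.+1; set s := Num.sqrt m.+1%:R.
have D_ge0 : 0 <= D := le_trans (sqrtr_ge0 _) dist_0.
have s_gt0 : 0 < s by rewrite sqrtr_gt0 ltr0n.
have F_lip2 z1 z2 :
    sqnorm (fun c => F z1 c - F z2 c) <= ell ^+ 2 * sqnorm (fun c => z1 c - z2 c).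
  rewrite -[sqnorm (fun c => z1 c - z2 c)]sqr_enorm -exprMn.
  by apply: sqnorm_le_sqr (F_lip z1 z2); rewrite mulr_ge0 ?sqrtr_ge0 ?ltW.
have F_zs0 c : F zstar c = 0 by rewrite /F F_zs.
have eta_ell' : eta * ell <= 1 / 150 by lra.
have dist_m1' := sqnorm_le_sqr D_ge0 dist_m1.
have dist_0' := sqnorm_le_sqr D_ge0 dist_0.
have grad_le : (eta * s) ^+ 2 * sqnorm (F z) <= 150 * D ^+ 2.
  rewrite exprMn sqr_sqrtr ?ler0n //.
  exact: og_grad_le F_mono F_lip2 F_zs0 eta_gt0 (ltW ell_gt0) eta_ell' dist_m1' dist_0' m.
have z_dist :=
  og_traj_dist_le F_mono F_lip2 F_zs0 eta_gt0 (ltW ell_gt0) eta_ell' dist_m1' dist_0' m.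
rewrite (_ : 180 * _ * _ / _ = K%:R * (180 * D ^+ 2 / (eta * s))); last by ring.
apply: gap_le => [k|||k z' dev]; [exact: is_C2_C1 | exact: F_mono | by rewrite mulr_ge0 |].
apply: le_trans (inner_le_young _ _ (mulr_gt0 eta_gt0 s_gt0)) _.
apply: le_trans (young_le_div (mulr_gt0 eta_gt0 s_gt0) grad_le (_ : _ <= 69 * D ^+ 2)) _.
  have := dev_set_sqdist zstar (mulr_ge0 (ler0n _ 3) D_ge0) dev.
  by have := dist_0'; rewrite sqnormBC; lra.
by rewrite invfM mulrA ler_pM2r ?invr_gt0 ?mulr_gt0 //; have := sqr_ge0 D; lra.
Qed.
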